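(* Let $f:(L',\alpha_{L'})\to(L,\alpha_L)$ be an $\alpha$-cover and $C=\mathfrak{uce}_\alpha(f)(\mathrm{Ker}\,U_{\alpha'})\subseteq\mathrm{Ker}\,U_\alpha$. Then: (a) For any $d\in\mathrm{Der}(L,\alpha_L)$ there exists $\delta_d\in\mathrm{Der}(L',\alpha_{L'})$ with $f\circ\delta_d=d\circ f$ if and only if $\mathfrak{uce}_\alpha(d)(C)\subseteq C$. In that case $\delta_d$ is uniquely determined by $f\circ\delta_d=d\circ f$ and $\delta_d(\mathrm{Ker}\,f)\subseteq\mathrm{Ker}\,f$. (b) The map $\Delta:\{d\in\mathrm{Der}(L,\alpha_L):\mathfrak{uce}_\alpha(d)(C)\subseteq C\}\to\{\rho\in\mathrm{Der}(L',\alpha_{L'}):\rho(\mathrm{Ker}\,f)\subseteq\mathrm{Ker}\,f\}$, $d\mapsto\delta_d$, is a linear isomorphism. (c) For the $\alpha$-cover $U_\alpha:\mathfrak{uce}_\alpha(L)\to L$, the map $d\mapsto\mathfrak{uce}_\alpha(d)$ is a linear isomorphism $\mathrm{Der}(L,\alpha_L)\to\{\delta\in\mathrm{Der}(\mathfrak{uce}_\alpha(L),\overline{\alpha}):\delta(\mathrm{Ker}\,U_\alpha)\subseteq\mathrm{Ker}\,U_\alpha\}$.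
   Context: Hom-Leibniz algebras are multiplicative: $(L,\alpha_L)$ is a $\mathbb{K}$-vector space with bilinear bracket and linear $\alpha_L$ such that $[\alpha_L(x),[y,z]]=[[x,y],\alpha_L(z)]-[[x,z],\alpha_L(y)]$ and $\alpha_L[x,y]=[\alpha_L(x),\alpha_L(y)]$; homomorphisms preserve brackets and commute with structure maps. $\mathrm{Der}(L,\alpha_L)$ is the space of linear $d:L\to L$ with $d[x,y]=[\alpha_L(x),d(y)]+[d(x),\alpha_L(y)]$ and $d\circ\alpha_L=\alpha_L\circ d$. $Z(K)=\{x:[x,y]=0=[y,x]\ \forall y\}$. $(L,\alpha_L)$ is $\alpha$-perfect if $L=[\alpha_L(L),\alpha_L(L)]$. A central extension is a surjective homomorphism $\pi$ with $\mathrm{Ker}\,\pi\subseteq Z(K)$. An $\alpha$-cover is a central extension $f:(L',\alpha_{L'})\to(L,\alpha_L)$ with $(L',\alpha_{L'})$ $\alpha$-perfect (then $L$ is $\alpha$-perfect). For $\alpha$-perfect $(L,\alpha_L)$: $I_L\subseteq\alpha_L(L)\otimes\alpha_L(L)$ is spanned by $-[x_1,x_2]\otimes\alpha_L(x_3)+[x_1,x_3]\otimes\alpha_L(x_2)+\alpha_L(x_1)\otimes[x_2,x_3]$; $\mathfrak{uce}_\alpha(L)=(\alpha_L(L)\otimes\alpha_L(L))/I_L$ with classes $\{\alpha_L(x_1),\alpha_L(x_2)\}$, bracket $[\{a,b\},\{c,e\}]=\{[a,b],[c,e]\}$, endomorphism $\overline{\alpha}\{\alpha_L(x_1),\alpha_L(x_2)\}=\{\alpha_L^2(x_1),\alpha_L^2(x_2)\}$,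 $U_\alpha\{a,b\}=[a,b]$ (the universal $\alpha$-central extension); $U_{\alpha'}$ is the same for $L'$. $\mathfrak{uce}_\alpha(f)\{\alpha_{L'}(x_1),\alpha_{L'}(x_2)\}=\{\alpha_L(f(x_1)),\alpha_L(f(x_2))\}$, and for $d\in\mathrm{Der}(L,\alpha_L)$, $\mathfrak{uce}_\alpha(d)\{\alpha_L(x_1),\alpha_L(x_2)\}=\{d(\alpha_L(x_1)),\alpha_L^2(x_2)\}+\{\alpha_L^2(x_1),d(\alpha_L(x_2))\}$, a derivation of $\mathfrak{uce}_\alpha(L)$. *)

From HB Require Import structures.
From mathcomp Require Import all_boot all_order all_algebra.
From mathcomp Require Import generic_quotient.
From Stdlib Require Import ClassicalEpsilon.
Set Implicit Arguments. Unset Strict Implicit. Unset Printing Implicit Defensive.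
Import GRing.Theory.
Local Open Scope ring_scope.
Local Open Scope quotient_scope.

Definition pbool (P : Prop) : bool :=
  if excluded_middle_informative P then true else false.
Lemma pboolP (P : Prop) : reflect P (pbool P).
Proof. by rewrite /pbool; case: excluded_middle_informative => h; constructor. Qed.

Section FreeQuot.
Variables (K : fieldType) (X : choiceType) (Rel : seq (K * X) -> Prop).

Definition fcoef (s : seq (K * X)) (x : X) : K := \sum_(p <- s | p.2 == x) p.1.
Definition fspan (h : X -> K) : Prop :=
  exists gs : seq (K * seq (K * X)), (forall g, g \in gs -> Rel g.2) /\
     forall x, h x = \sum_(g <- gs) g.1 * fcoef g.2 x.

Lemma fspan_ext h h' : (forall x, h x = h' x) -> fspan h -> fspan h'.
Proof. by move=> e [gs [Hg Hs]]; exists gs; split=> // x; rewrite -e. Qed.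
Lemma fspan0 : fspan (fun _ => 0).
Proof. by exists [::]; split=> // x; rewrite big_nil. Qed.
Lemma fspanD h1 h2 : fspan h1 -> fspan h2 -> fspan (fun x => h1 x + h2 x).
Proof.
move=> [g1 [G1 S1]] [g2 [G2 S2]]; exists (g1 ++ g2); split.
  by move=> g; rewrite mem_cat => /orP [/G1|/G2].
by move=> x; rewrite big_cat S1 S2.
Qed.
Lemma fspanZ k h : fspan h -> fspan (fun x => k * h x).
Proof.
move=> [g [G S]]; exists [seq (k * q.1, q.2) | q <- g]; split.
  by move=> q /mapP [q' /G H ->].
by move=> x; rewrite big_map S mulr_sumr; apply: eq_bigr => q _; rewrite mulrA.
Qed.

Definition fclose (h h' : X -> K) := fspan (fun x => h x - h' x).
Lemma fclose_eq h h' : (forall x, h x = h' x) -> fclose h h'.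
Proof. by move=> e; apply: fspan_ext fspan0 => x; rewrite e subrr. Qed.
Lemma fclose_refl h : fclose h h. Proof. exact: fclose_eq. Qed.
Lemma fclose_sym h h' : fclose h h' -> fclose h' h.
Proof. by move=> /(fspanZ (-1)); apply: fspan_ext => x; rewrite mulN1r opprB. Qed.
Lemma fclose_trans h1 h2 h3 : fclose h1 h2 -> fclose h2 h3 -> fclose h1 h3.
Proof. by move=> a b; apply: fspan_ext (fspanD a b) => x; rewrite addrA subrK. Qed.
Lemma fcloseD a a' b b' : fclose a a' -> fclose b b' ->
  fclose (fun x => a x + b x) (fun x => a' x + b' x).
Proof. by move=> h1 h2; apply: fspan_ext (fspanD h1 h2) => x; rewrite addrACA -opprD. Qed.
Lemma fcloseZ k a a' : fclose a a' -> fclose (fun x => k * a x) (fun x => k * a' x).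
Proof. by move=> h; apply: fspan_ext (fspanZ k h) => x; rewrite mulrBr. Qed.

Definition fequiv (s t : seq (K * X)) : bool := pbool (fclose (fcoef s) (fcoef t)).
Lemma fequiv_refl : reflexive fequiv.
Proof. by move=> s; apply/pboolP/fclose_refl. Qed.
Lemma fequiv_sym : symmetric fequiv.
Proof. by move=> s t; apply/pboolP/pboolP => /fclose_sym. Qed.
Lemma fequiv_trans : transitive fequiv.
Proof. by move=> t s u /pboolP a /pboolP b; apply/pboolP/(fclose_trans a b). Qed.
Canonical fequiv_rel := EquivRel fequiv fequiv_refl fequiv_sym fequiv_trans.

Definition fquot : Type := {eq_quot fequiv_rel}.
HB.instance Definition _ := Choice.on fquot.
HB.instance Definition _ := EqQuotient.on fquot.

Lemma fcoef_cat s t x : fcoef (s ++ t) x = fcoef s x + fcoef t x.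
Proof. by rewrite /fcoef big_cat. Qed.
Definition fscl (k : K) (s : seq (K * X)) := [seq (k * p.1, p.2) | p <- s].
Lemma fcoef_scl k s x : fcoef (fscl k s) x = k * fcoef s x.
Proof. by rewrite /fcoef big_map mulr_sumr. Qed.
Lemma fcoef_nil x : fcoef [::] x = 0.
Proof. by rewrite /fcoef big_nil. Qed.

Lemma fpi_eq s t : fclose (fcoef s) (fcoef t) -> \pi_fquot s = \pi_fquot t.
Proof. by move=> h; apply/eqmodP/pboolP. Qed.
Lemma frepr_pi s : fclose (fcoef (repr (\pi_fquot s))) (fcoef s).
Proof. by apply/pboolP; apply/(@eqquotP _ _ fquot); rewrite reprK. Qed.

Local Notation fc u := (fcoef (repr u)).
Definition fzero : fquot := \pi_fquot [::].
Definition fadd (u v : fquot) : fquot := \pi_fquot (repr u ++ repr v).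
Definition fopp (u : fquot) : fquot := \pi_fquot (fscl (-1) (repr u)).
Definition fscale (k : K) (u : fquot) : fquot := \pi_fquot (fscl k (repr u)).

Lemma feq (u v : fquot) : fclose (fc u) (fc v) -> u = v.
Proof. by move=> h; rewrite -[u]reprK -[v]reprK; apply: fpi_eq. Qed.
Lemma Cpi s h : fclose (fcoef s) h -> fclose (fcoef (repr (\pi_fquot s))) h.
Proof. exact: fclose_trans (frepr_pi s). Qed.
Lemma Cadd u v : fclose (fc (fadd u v)) (fun x => fc u x + fc v x).
Proof. by apply: Cpi; apply: fclose_eq => x; rewrite fcoef_cat. Qed.
Lemma Czero : fclose (fc fzero) (fun _ => 0).
Proof. by apply: Cpi; apply: fclose_eq => x; rewrite fcoef_nil. Qed.
Lemma Cscale k u : fclose (fc (fscale k u)) (fun x => k * fc u x).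
Proof. by apply: Cpi; apply: fclose_eq => x; rewrite fcoef_scl. Qed.
Lemma Copp u : fclose (fc (fopp u)) (fun x => - fc u x).
Proof. by apply: Cpi; apply: fclose_eq => x; rewrite fcoef_scl mulN1r. Qed.

Lemma faddA : associative fadd.
Proof.
move=> u v w; apply: feq.
apply: fclose_trans (Cadd _ _) _.
apply: fclose_trans (fcloseD (fclose_refl _) (Cadd _ _)) _.
apply: fclose_trans _ (fclose_sym (Cadd _ _)).
apply: fclose_trans _ (fclose_sym (fcloseD (Cadd _ _) (fclose_refl _))).
by apply: fclose_eq => x; rewrite addrA.
Qed.
Lemma faddC : commutative fadd.
Proof.
move=> u v; apply: feq.
apply: fclose_trans (Cadd _ _) _.
apply: fclose_trans _ (fclose_sym (Cadd _ _)).
by apply: fclose_eq => x; rewrite addrC.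
Qed.
Lemma fadd0 : left_id fzero fadd.
Proof.
move=> u; apply: feq.
apply: fclose_trans (Cadd _ _) _.
apply: fclose_trans (fcloseD Czero (fclose_refl _)) _.
by apply: fclose_eq => x; rewrite add0r.
Qed.
Lemma faddN : left_inverse fzero fopp fadd.
Proof.
move=> u; apply: feq.
apply: fclose_trans (Cadd _ _) _.
apply: fclose_trans (fcloseD (Copp _) (fclose_refl _)) _.
apply: fclose_trans _ (fclose_sym Czero).
by apply: fclose_eq => x; rewrite addNr.
Qed.

HB.instance Definition _ := GRing.isZmodule.Build fquot faddA faddC fadd0 faddN.

Lemma fscaleA a b v : fscale a (fscale b v) = fscale (a * b) v.
Proof.
apply: feq.
apply: fclose_trans (Cscale _ _) _.
apply: fclose_trans (fcloseZ a (Cscale _ _)) _.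
apply: fclose_trans _ (fclose_sym (Cscale _ _)).
by apply: fclose_eq => x; rewrite mulrA.
Qed.
Lemma fscale1 : left_id 1 fscale.
Proof.
move=> u; apply: feq.
apply: fclose_trans (Cscale _ _) _.
by apply: fclose_eq => x; rewrite mul1r.
Qed.
Lemma fscaleDr : right_distributive fscale +%R.
Proof.
move=> a u v; apply: feq.
apply: fclose_trans (Cscale _ _) _.
apply: fclose_trans (fcloseZ a (Cadd _ _)) _.
apply: fclose_trans _ (fclose_sym (Cadd _ _)).
apply: fclose_trans _ (fclose_sym (fcloseD (Cscale _ _) (Cscale _ _))).
by apply: fclose_eq => x; rewrite mulrDr.
Qed.
Lemma fscaleDl v : {morph fscale^~ v : a b / a + b}.
Proof.
move=> a b; apply: feq.
apply: fclose_trans (Cscale _ _) _.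
apply: fclose_trans _ (fclose_sym (Cadd _ _)).
apply: fclose_trans _ (fclose_sym (fcloseD (Cscale _ _) (Cscale _ _))).
by apply: fclose_eq => x; rewrite mulrDl.
Qed.

HB.instance Definition _ :=
  GRing.Zmodule_isLmodule.Build K fquot fscaleA fscale1 fscaleDr fscaleDl.

End FreeQuot.


Unset Implicit Arguments.

Definition lin {K : fieldType} {U W : lmodType K} (f : U -> W) : Prop :=
  forall (k : K) (x y : U), f (k *: x + y) = k *: f x + f y.

Definition bilin {K : fieldType} {V : lmodType K} (br : V -> V -> V) : Prop :=
  (forall x, lin (br x)) /\ (forall y, lin (fun x => br x y)).

Definition hom_leibniz {K : fieldType} {V : lmodType K} (br : V -> V -> V) (al : V -> V) : Prop :=
  [/\ bilin br, lin al,
      (forall x y z, br (al x) (br y z) = br (br x y) (al z) - br (br x z) (al y))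
    & (forall x y, al (br x y) = br (al x) (al y))].

Definition is_der {K : fieldType} {V : lmodType K} (br : V -> V -> V) (al : V -> V) (d : V -> V) : Prop :=
  [/\ lin d,
      (forall x y, d (br x y) = br (al x) (d y) + br (d x) (al y))
    & (forall x, d (al x) = al (d x))].

Definition is_hom {K : fieldType} {V W : lmodType K} (brV : V -> V -> V) (alV : V -> V)
    (brW : W -> W -> W) (alW : W -> W) (f : V -> W) : Prop :=
  [/\ lin f, (forall x y, f (brV x y) = brW (f x) (f y))
    & (forall x, f (alV x) = alW (f x))].

Definition central_ext {K : fieldType} {V W : lmodType K} (brV : V -> V -> V) (alV : V -> V)
    (brW : W -> W -> W) (alW : W -> W) (f : V -> W) : Prop :=
  [/\ is_hom brV alV brW alW f, (forall y, exists x, f x = y)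
    & (forall x, f x = 0 -> forall y, brV x y = 0 /\ brV y x = 0)].

Definition alpha_perfect {K : fieldType} {V : lmodType K} (br : V -> V -> V) (al : V -> V) : Prop :=
  forall x : V, exists s : seq (K * (V * V)),
    x = \sum_(p <- s) p.1 *: br (al p.2.1) (al p.2.2).

Definition alpha_cover {K : fieldType} {V W : lmodType K} (brV : V -> V -> V) (alV : V -> V)
    (brW : W -> W -> W) (alW : W -> W) (f : V -> W) : Prop :=
  central_ext brV alV brW alW f /\ alpha_perfect brV alV.

(* uce_alpha(V) = (V (x) V) / I_V, realised as the free K-vector space *)
(* on V * V (finite formal sums, encoded as sequences of (scalar,pair))*)
(* modulo the span of the bilinearity relations and of the generators *)
(* of I_V.  A class of [:: (1,(a,b))] is the element {a,b}.            *)
Definition uce_rel {K : fieldType} {V : lmodType K} (br : V -> V -> V) (al : V -> V)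
    (r : seq (K * (V * V))) : Prop :=
     (exists a a' b, r = [:: (1, (a + a', b)); (-1, (a, b)); (-1, (a', b))])
  \/ (exists a b b', r = [:: (1, (a, b + b')); (-1, (a, b)); (-1, (a, b'))])
  \/ (exists k a b, r = [:: (1, (k *: a, b)); (- k, (a, b))])
  \/ (exists k a b, r = [:: (1, (a, k *: b)); (- k, (a, b))])
  \/ (exists x1 x2 x3, r = [:: (-1, (br x1 x2, al x3)); (1, (br x1 x3, al x2));
                              (1, (al x1, br x2 x3))]).

Definition uce {K : fieldType} {V : lmodType K} (br : V -> V -> V) (al : V -> V) : Type :=
  fquot (uce_rel br al).
HB.instance Definition _ {K : fieldType} {V : lmodType K} (br : V -> V -> V) (al : V -> V) :=
  GRing.Lmodule.on (uce br al).
HB.instance Definition _ {K : fieldType} {V : lmodType K} (br : V -> V -> V) (al : V -> V) :=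
  EqQuotient.on (uce br al).

Definition uce_pair {K : fieldType} {V : lmodType K} (br : V -> V -> V) (al : V -> V) (a b : V)
  : uce br al := \pi_(uce br al) [:: (1, (a, b))].

Definition uceU {K : fieldType} {V : lmodType K} (br : V -> V -> V) (al : V -> V) (u : uce br al) : V :=
  \sum_(p <- repr u) p.1 *: br p.2.1 p.2.2.

Definition uce_br {K : fieldType} {V : lmodType K} (br : V -> V -> V) (al : V -> V)
    (u v : uce br al) : uce br al :=
  uce_pair br al (uceU br al u) (uceU br al v).

Definition uce_al {K : fieldType} {V : lmodType K} (br : V -> V -> V) (al : V -> V)
    (u : uce br al) : uce br al :=
  \pi_(uce br al) [seq (p.1, (al p.2.1, al p.2.2)) | p <- repr u].

Definition uce_hom {K : fieldType} {V W : lmodType K} (brV : V -> V -> V) (alV : V -> V)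
    (brW : W -> W -> W) (alW : W -> W) (f : V -> W) (u : uce brV alV) : uce brW alW :=
  \pi_(uce brW alW) [seq (p.1, (f p.2.1, f p.2.2)) | p <- repr u].

Definition uce_der {K : fieldType} {V : lmodType K} (br : V -> V -> V) (al : V -> V) (d : V -> V)
    (u : uce br al) : uce br al :=
  \pi_(uce br al)
    ([seq (p.1, (d p.2.1, al p.2.2)) | p <- repr u]
     ++ [seq (p.1, (al p.2.1, d p.2.2)) | p <- repr u]).

Definition uceC {K : fieldType} {V W : lmodType K} (brV : V -> V -> V) (alV : V -> V)
    (brW : W -> W -> W) (alW : W -> W) (f : V -> W) (v : uce brW alW) : Prop :=
  exists u : uce brV alV, uceU brV alV u = 0 /\ v = uce_hom brV alV brW alW f u.

From HB Require Import structures.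
From mathcomp Require Import all_boot all_order all_algebra.
From mathcomp Require Import generic_quotient ssrAC.
From Stdlib Require Import ClassicalEpsilon.
Import GRing.Theory.
Local Open Scope ring_scope.
Local Open Scope quotient_scope.
Set Implicit Arguments. Unset Strict Implicit. Unset Printing Implicit Defensive.

(* 1. uce(L) is the free vector space on L x L modulo bilinearity and the
      generators of I_L.  Its universal property (uce_lift, uce_lin_eq): a
      map g on pairs that is bilinear and kills the Leibniz generators extends
      linearly to uce(L), and linear maps on uce(L) are determined by their
      values on the classes {a,b}.  The structure maps U, alpha-bar, uce(f)
      and uce(d) are such extensions, whence their identities on generators.
   2. Descent (descend_der): a derivation D of A that preserves the kernel of
      a surjective homomorphism tau : A -> B induces the derivation
      tau o D o t of B, for any section t of tau.
   3. For an alpha-cover f the kernel of f is central, so the bracket of L'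
      only depends on images under f; hence {a,b} |-> [s a, s b] (s a section
      of f) is a surjective homomorphism tau : uce(L) -> L' with
      f o tau = U, tau o uce(f) = U', and kernel exactly C.  Descending uce(d)
      along tau gives the lift delta_d of (a); descending along f gives the
      inverse of Delta in (b); descending along U gives the inverse of
      d |-> uce(d) in (c).  Uniqueness of lifts follows from the
      alpha-perfectness of L'. *)

Definition rsection (A B : Type) (f : A -> B) (fS : forall y, exists x, f x = y)
  (y : B) : A := proj1_sig (constructive_indefinite_description _ (fS y)).

Lemma rsectionK (A B : Type) (f : A -> B) (fS : forall y, exists x, f x = y) y :
  f (rsection fS y) = y.
Proof. by rewrite /rsection; case: constructive_indefinite_description. Qed.

Section FreeLift.
Variables (K : fieldType) (X : choiceType) (Rel : seq (K * X) -> Prop).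
Local Notation Q := (fquot Rel).
Implicit Types (s t : seq (K * X)).

Definition flift (W : lmodType K) (g : X -> W) s : W := \sum_(p <- s) p.1 *: g p.2.

Lemma flift_coef (W : lmodType K) (g : X -> W) s :
  flift g s = \sum_(x <- undup (map snd s)) fcoef s x *: g x.
Proof.
transitivity (\sum_(p <- s) \sum_(x <- undup (map snd s) | p.2 == x) p.1 *: g p.2).
  apply: eq_big_seq => p ps; rewrite -big_filter.
  rewrite (@eq_filter _ _ (pred1 p.2)); last by move=> x /=; rewrite eq_sym.
  by rewrite filter_pred1_uniq ?undup_uniq ?mem_undup ?map_f // big_seq1.
rewrite (exchange_big_dep predT) //=; apply: eq_bigr => x _.
by rewrite /fcoef scaler_suml; apply: eq_bigr => p /eqP ->.
Qed.

Lemma flift_coef0 (W : lmodType K) (g : X -> W) s :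
  (forall x, fcoef s x = 0) -> flift g s = 0.
Proof. by move=> s0; rewrite flift_coef big1 // => x _; rewrite s0 scale0r. Qed.

Lemma flift_cat (W : lmodType K) (g : X -> W) s t :
  flift g (s ++ t) = flift g s + flift g t.
Proof. by rewrite /flift big_cat. Qed.

Lemma flift_scl (W : lmodType K) (g : X -> W) k s :
  flift g (fscl k s) = k *: flift g s.
Proof. by rewrite /flift big_map scaler_sumr; apply: eq_bigr => p _; rewrite scalerA. Qed.

Lemma flift_flatten (W : lmodType K) (g : X -> W) (ss : seq (seq (K * X))) :
  flift g (flatten ss) = \sum_(s <- ss) flift g s.
Proof. by rewrite /flift big_flatten. Qed.

Lemma fcoef_flatten (ss : seq (seq (K * X))) x :
  fcoef (flatten ss) x = \sum_(s <- ss) fcoef s x.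
Proof. by rewrite /fcoef big_flatten. Qed.

Definition kills (W : lmodType K) (g : X -> W) := forall r, Rel r -> flift g r = 0.

Lemma flift_close (W : lmodType K) (g : X -> W) s t :
  kills g -> fclose Rel (fcoef s) (fcoef t) -> flift g s = flift g t.
Proof.
move=> gR [gs [gsR st]].
(* s - t - sum_j c_j r_j has only zero coefficients, for the relators r_j. *)
pose w := s ++ fscl (-1) t ++ flatten [seq fscl (- q.1) q.2 | q <- gs].
have w0 : forall x, fcoef w x = 0.
  move=> x; rewrite !fcoef_cat fcoef_scl fcoef_flatten big_map.
  under eq_bigr do rewrite fcoef_scl mulNr.
  by rewrite sumrN -st mulN1r addrA subrr.
have := flift_coef0 g w0; rewrite !flift_cat flift_scl flift_flatten big_map.
rewrite big1_seq ?addr0; last by move=> q qgs; rewrite flift_scl gR ?scaler0 //; apply: gsR.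
by rewrite scaleN1r => /eqP; rewrite subr_eq0 => /eqP.
Qed.

Lemma flift_pi (W : lmodType K) (g : X -> W) s :
  kills g -> flift g (repr (\pi_Q s)) = flift g s.
Proof. by move=> gR; apply: flift_close (frepr_pi _ _). Qed.

Lemma pi_add s t : (\pi_Q s : Q) + \pi_Q t = \pi_Q (s ++ t).
Proof.
change (fadd (\pi_Q s) (\pi_Q t) = \pi_Q (s ++ t)); apply: fpi_eq.
apply: (@fclose_trans _ _ _ _ (fun x => fcoef (repr (\pi_Q s)) x + fcoef (repr (\pi_Q t)) x)).
  by apply: fclose_eq => x; rewrite fcoef_cat.
apply: fclose_trans (fcloseD (frepr_pi _ _) (frepr_pi _ _)) _.
by apply: fclose_eq => x; rewrite fcoef_cat.
Qed.

Lemma pi_scale k s : k *: (\pi_Q s : Q) = \pi_Q (fscl k s).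
Proof.
change (fscale k (\pi_Q s) = \pi_Q (fscl k s)); apply: fpi_eq.
apply: (@fclose_trans _ _ _ _ (fun x => k * fcoef (repr (\pi_Q s)) x)).
  by apply: fclose_eq => x; rewrite fcoef_scl.
apply: fclose_trans (fcloseZ k (frepr_pi _ _)) _.
by apply: fclose_eq => x; rewrite fcoef_scl.
Qed.

Lemma pi_sum s : \pi_Q s = \sum_(p <- s) p.1 *: (\pi_Q [:: (1, p.2)] : Q).
Proof.
elim: s => [|[k x] s IH]; first by rewrite big_nil.
by rewrite big_cons -IH pi_scale pi_add /fscl /= mulr1.
Qed.

Lemma rel_zero r : Rel r -> \pi_Q r = 0 :> Q.
Proof.
move=> rR; apply: (@fpi_eq _ _ _ r [::]).
exists [:: (1, r)]; split; first by move=> q; rewrite inE => /eqP ->.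
by move=> x; rewrite big_seq1 fcoef_nil subr0 mul1r.
Qed.

End FreeLift.

Section Linear.
Variables (K : fieldType) (U W Z : lmodType K).
Implicit Types (f g : U -> W).

Lemma lin0 f : lin f -> f 0 = 0.
Proof.
move=> fL; have := fL 1 0 0; rewrite scale1r addr0 scale1r => f00.
by apply: (addrI (f 0)); rewrite addr0 -f00.
Qed.

Lemma linD f : lin f -> forall x y, f (x + y) = f x + f y.
Proof. by move=> fL x y; have := fL 1 x y; rewrite !scale1r. Qed.

Lemma linZ f : lin f -> forall k x, f (k *: x) = k *: f x.
Proof. by move=> fL k x; have := fL k x 0; rewrite !addr0 (lin0 fL) addr0. Qed.

Lemma linB f : lin f -> forall x y, f (x - y) = f x - f y.
Proof. by move=> fL x y; rewrite linD // -scaleN1r linZ // scaleN1r. Qed.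

Lemma lin_sum f : lin f -> forall (I : Type) (r : seq I) (F : I -> U),
  f (\sum_(i <- r) F i) = \sum_(i <- r) f (F i).
Proof. by move=> fL I r F; apply: (big_morph f (linD fL) (lin0 fL)). Qed.

Lemma lin_comp (h : W -> Z) g : lin h -> lin g -> lin (fun x => h (g x)).
Proof. by move=> hL gL k x y; rewrite gL hL. Qed.

Lemma lin_add f g : lin f -> lin g -> lin (fun x => f x + g x).
Proof. by move=> fL gL c x y; rewrite fL gL scalerDr addrACA. Qed.

Lemma lin_comb f g k : lin f -> lin g -> lin (fun x => k *: f x + g x).
Proof.
move=> fL gL c x y; rewrite fL gL !scalerDr !scalerA (mulrC k c).
by rewrite addrACA.
Qed.

End Linear.

Lemma hom_lin (K : fieldType) (V W : lmodType K) (brV : V -> V -> V) (alV : V -> V)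
    (brW : W -> W -> W) (alW : W -> W) (f : V -> W) :
  is_hom brV alV brW alW f -> lin f.
Proof. by case. Qed.

Lemma der_lin (K : fieldType) (V : lmodType K) (br : V -> V -> V) (al : V -> V)
    (d : V -> V) : is_der br al d -> lin d.
Proof. by case. Qed.

Section UceUniversal.
Variables (K : fieldType) (V : lmodType K) (br : V -> V -> V) (al : V -> V).
Local Notation E := (uce br al).
Local Notation P := (uce_pair br al).
Local Notation Rel := (uce_rel br al).

Definition uce_lift (W : lmodType K) (g : V * V -> W) (u : E) : W := flift g (repr u).

Lemma pi_uce s : \pi_E s = \sum_(p <- s) p.1 *: P p.2.1 p.2.2.
Proof. by rewrite (@pi_sum _ _ Rel); apply: eq_bigr => -[k [a b]]. Qed.

Lemma uce_span u : u = \sum_(p <- repr u) p.1 *: P p.2.1 p.2.2.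
Proof. by rewrite -pi_uce reprK. Qed.

Lemma pair_rel r : Rel r -> \sum_(p <- r) p.1 *: P p.2.1 p.2.2 = 0.
Proof. by move=> rR; rewrite -pi_uce; apply: rel_zero. Qed.

Lemma pair_linl b : lin (fun a => P a b).
Proof.
move=> k a a'.
have /pair_rel : Rel [:: (1, (k *: a + a', b)); (-1, (k *: a, b)); (-1, (a', b))].
  by left; exists (k *: a), a', b.
have /pair_rel : Rel [:: (1, (k *: a, b)); (- k, (a, b))].
  by right; right; left; exists k, a, b.
rewrite !big_cons big_nil /= !scale1r !scaleN1r scaleNr !addr0.
by move=> /eqP; rewrite subr_eq0 => /eqP-> /eqP; rewrite -opprD subr_eq0 => /eqP.
Qed.

Lemma pair_linr a : lin (P a).
Proof.
move=> k b b'.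
have /pair_rel : Rel [:: (1, (a, k *: b + b')); (-1, (a, k *: b)); (-1, (a, b'))].
  by right; left; exists a, (k *: b), b'.
have /pair_rel : Rel [:: (1, (a, k *: b)); (- k, (a, b))].
  by right; right; right; left; exists k, a, b.
rewrite !big_cons big_nil /= !scale1r !scaleN1r scaleNr !addr0.
by move=> /eqP; rewrite subr_eq0 => /eqP-> /eqP; rewrite -opprD subr_eq0 => /eqP.
Qed.

Lemma pair_leibniz x1 x2 x3 :
  - P (br x1 x2) (al x3) + P (br x1 x3) (al x2) + P (al x1) (br x2 x3) = 0.
Proof.
have /pair_rel : Rel [:: (-1, (br x1 x2, al x3)); (1, (br x1 x3, al x2));
                        (1, (al x1, br x2 x3))].
  by right; right; right; right; exists x1, x2, x3.
by rewrite !big_cons big_nil /= !scale1r scaleN1r addr0 addrA.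
Qed.

Lemma kills_uce_rel (W : lmodType K) (g : V * V -> W) :
  (forall b, lin (fun a => g (a, b))) -> (forall a, lin (fun b => g (a, b))) ->
  (forall x1 x2 x3,
     - g (br x1 x2, al x3) + g (br x1 x3, al x2) + g (al x1, br x2 x3) = 0) ->
  kills Rel g.
Proof.
move=> gl gr gLeib r.
case=> [[a [a' [b ->]]]|[[a [b [b' ->]]]|[[k [a [b ->]]]|[[k [a [b ->]]]|[x1 [x2 [x3 ->]]]]]]];
  rewrite /flift !big_cons big_nil /= ?scale1r ?scaleN1r ?addr0.
- by rewrite (linD (gl b)) -opprD subrr.
- by rewrite (linD (gr a)) -opprD subrr.
- by rewrite (linZ (gl b)) scaleNr subrr.
- by rewrite (linZ (gr a)) scaleNr subrr.
- by rewrite addrA.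
Qed.

Section Lift.
Variables (W : lmodType K) (g : V * V -> W).
Hypothesis gR : kills Rel g.

Lemma uce_lift_pi s : uce_lift g (\pi_E s) = flift g s.
Proof. exact: flift_pi. Qed.

Lemma uce_lift_pair a b : uce_lift g (P a b) = g (a, b).
Proof. by rewrite /uce_pair uce_lift_pi /flift big_seq1 scale1r. Qed.

Lemma uce_lift_lin : lin (uce_lift g).
Proof.
move=> k x y; rewrite -[x]reprK -[y]reprK (@pi_scale _ _ Rel) (@pi_add _ _ Rel).
by rewrite !uce_lift_pi flift_cat flift_scl.
Qed.

End Lift.

Lemma uce_lin_eq (W : lmodType K) (F G : E -> W) : lin F -> lin G ->
  (forall a b, F (P a b) = G (P a b)) -> forall u, F u = G u.
Proof.
move=> FL GL FG u; rewrite (uce_span u) (lin_sum FL) (lin_sum GL).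
by apply: eq_bigr => p _; rewrite (linZ FL) (linZ GL) FG.
Qed.

Lemma uce_al_lift u : uce_al br al u = uce_lift (fun x => P (al x.1) (al x.2)) u.
Proof. by rewrite /uce_al pi_uce big_map. Qed.

Lemma uce_der_lift d u :
  uce_der br al d u = uce_lift (fun x => P (d x.1) (al x.2) + P (al x.1) (d x.2)) u.
Proof.
rewrite /uce_der pi_uce big_cat !big_map /= -big_split /=.
by apply: eq_bigr => p _; rewrite scalerDr.
Qed.

End UceUniversal.

(* Rearranging three instances of a three-term relation; this is how a
   derivation respects the Leibniz generators. *)
Lemma add_three_relations (W : zmodType) (A1 A2 A3 B1 B2 B3 C1 C2 C3 : W) :
  - A2 + B2 + C1 = 0 -> - A1 + B3 + C3 = 0 -> - A3 + B1 + C2 = 0 ->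
  - ((A1 + A2) + A3) + ((B1 + B2) + B3) + (C1 + (C2 + C3)) = 0.
Proof.
move=> h1 h2 h3.
have -> : - ((A1 + A2) + A3) + ((B1 + B2) + B3) + (C1 + (C2 + C3)) =
          (- A2 + B2 + C1) + (- A1 + B3 + C3) + (- A3 + B1 + C2).
  by rewrite !opprD !addrA [LHS](ACl (2*5*7*1*6*9*3*4*8)).
by rewrite h1 h2 h3 !addr0.
Qed.

Section UceHomLeibniz.
Variables (K : fieldType) (V : lmodType K) (br : V -> V -> V) (al : V -> V).
Hypothesis HV : hom_leibniz br al.
Local Notation P := (uce_pair br al).
Local Notation U := (uceU br al).

Lemma br_linl y : lin (fun x => br x y). Proof. by case: HV => -[]. Qed.
Lemma br_linr x : lin (br x). Proof. by case: HV => -[]. Qed.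
Lemma al_lin : lin al. Proof. by case: HV. Qed.
Lemma al_br x y : al (br x y) = br (al x) (al y). Proof. by case: HV. Qed.

Lemma br_leibniz x1 x2 x3 :
  - br (br x1 x2) (al x3) + br (br x1 x3) (al x2) + br (al x1) (br x2 x3) = 0.
Proof. by case: HV => _ _ -> _; rewrite addrACA addNr subrr addr0. Qed.

Lemma kills_br : kills (uce_rel br al) (fun x => br x.1 x.2).
Proof.
by apply: kills_uce_rel => [b|a|]; [exact: br_linl | exact: br_linr | exact: br_leibniz].
Qed.

Lemma kills_al : kills (uce_rel br al) (fun x => P (al x.1) (al x.2)).
Proof.
apply: kills_uce_rel => [b|a|x1 x2 x3] /=.
- exact: lin_comp (pair_linl _ _ _) al_lin.
- exact: lin_comp (pair_linr _ _ _) al_lin.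
by rewrite !al_br pair_leibniz.
Qed.

Lemma kills_der d : is_der br al d ->
  kills (uce_rel br al) (fun x => P (d x.1) (al x.2) + P (al x.1) (d x.2)).
Proof.
case=> dL dbr dal.
apply: kills_uce_rel => [b|a|x1 x2 x3] /=.
- exact: lin_add (lin_comp (pair_linl _ _ _) dL) (lin_comp (pair_linl _ _ _) al_lin).
- exact: lin_add (lin_comp (pair_linr _ _ _) al_lin) (lin_comp (pair_linr _ _ _) dL).
rewrite !dbr !al_br !dal !(linD (pair_linl _ _ _)) !(linD (pair_linr _ _ _)).
apply: add_three_relations; exact: pair_leibniz.
Qed.

Lemma uceU_lin : lin U. Proof. exact: uce_lift_lin kills_br. Qed.

Lemma uceU_pair a b : U (P a b) = br a b. Proof. exact: (uce_lift_pair kills_br a b). Qed.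

Lemma uce_al_lin : lin (uce_al br al).
Proof. by move=> k x y; rewrite !uce_al_lift; apply: (uce_lift_lin kills_al). Qed.

Lemma uce_al_pair a b : uce_al br al (P a b) = P (al a) (al b).
Proof. by rewrite uce_al_lift uce_lift_pair //; apply: kills_al. Qed.

Lemma uce_der_lin d : is_der br al d -> lin (uce_der br al d).
Proof. by move=> dD k x y; rewrite !uce_der_lift; apply: (uce_lift_lin (kills_der dD)). Qed.

Lemma uce_der_pair d a b : is_der br al d ->
  uce_der br al d (P a b) = P (d a) (al b) + P (al a) (d b).
Proof. by move=> dD; rewrite uce_der_lift uce_lift_pair //; apply: kills_der. Qed.

Lemma uceU_hom : is_hom (uce_br br al) (uce_al br al) br al U.
Proof.
split=> [|u v|]; [exact: uceU_lin | exact: uceU_pair |].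
apply: uce_lin_eq; [exact: lin_comp uceU_lin uce_al_lin | exact: lin_comp al_lin uceU_lin |].
by move=> a b; rewrite uce_al_pair !uceU_pair al_br.
Qed.

Lemma uceU_der d u : is_der br al d -> U (uce_der br al d u) = d (U u).
Proof.
move=> dD; have [dL dbr _] := dD; move: u.
apply: uce_lin_eq; [exact: lin_comp uceU_lin (uce_der_lin dD) | exact: lin_comp dL uceU_lin |].
by move=> a b; rewrite uce_der_pair // (linD uceU_lin) !uceU_pair dbr addrC.
Qed.

Lemma uce_der_is_der d : is_der br al d ->
  is_der (uce_br br al) (uce_al br al) (uce_der br al d).
Proof.
move=> dD; have [_ _ dal] := dD; have [_ _ Ual] := uceU_hom; split.
- exact: uce_der_lin.
- by move=> u v; rewrite /uce_br uce_der_pair // !Ual !uceU_der // addrC.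
apply: uce_lin_eq; [exact: lin_comp (uce_der_lin dD) uce_al_lin |
                    exact: lin_comp uce_al_lin (uce_der_lin dD) |].
by move=> a b; rewrite uce_al_pair !uce_der_pair // (linD uce_al_lin) !uce_al_pair !dal.
Qed.

Lemma der_comb k d1 d2 : is_der br al d1 -> is_der br al d2 ->
  is_der br al (fun y => k *: d1 y + d2 y).
Proof.
case=> d1L d1br d1al [d2L d2br d2al]; split.
- exact: lin_comb.
- by move=> x y; rewrite d1br d2br br_linl br_linr scalerDr addrACA.
by move=> x; rewrite d1al d2al al_lin.
Qed.

Lemma uce_der_comb k d1 d2 : is_der br al d1 -> is_der br al d2 -> forall u,
  uce_der br al (fun y => k *: d1 y + d2 y) u
  = k *: uce_der br al d1 u + uce_der br al d2 u.
Proof.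
move=> d1D d2D; apply: uce_lin_eq.
- exact: uce_der_lin (der_comb _ d1D d2D).
- exact: lin_comb (uce_der_lin d1D) (uce_der_lin d2D).
move=> a b; rewrite !uce_der_pair //; last exact: der_comb.
by rewrite pair_linl pair_linr scalerDr addrACA.
Qed.

Lemma uceU_surj : alpha_perfect br al -> forall x, exists u, U u = x.
Proof.
move=> Vperf x; have [s ->] := Vperf x.
exists (\sum_(p <- s) p.1 *: P (al p.2.1) (al p.2.2)).
by rewrite (lin_sum uceU_lin); apply: eq_bigr => p _; rewrite (linZ uceU_lin) uceU_pair.
Qed.

End UceHomLeibniz.

Section UceFunctor.
Variables (K : fieldType) (V W : lmodType K).
Variables (brV : V -> V -> V) (alV : V -> V) (brW : W -> W -> W) (alW : W -> W).
Hypotheses (HV : hom_leibniz brV alV) (HW : hom_leibniz brW alW).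
Variable f : V -> W.
Hypothesis fH : is_hom brV alV brW alW f.
Local Notation PV := (uce_pair brV alV).
Local Notation PW := (uce_pair brW alW).
Local Notation uf := (uce_hom brV alV brW alW f).

Lemma kills_hom : kills (uce_rel brV alV) (fun x => PW (f x.1) (f x.2)).
Proof.
have [fL fbr fal] := fH.
apply: kills_uce_rel => [b|a|x1 x2 x3] /=.
- exact: lin_comp (pair_linl _ _ _) fL.
- exact: lin_comp (pair_linr _ _ _) fL.
by rewrite !fbr !fal pair_leibniz.
Qed.

Lemma uce_hom_lift u : uf u = uce_lift (fun x => PW (f x.1) (f x.2)) u.
Proof. by rewrite /uce_hom pi_uce big_map. Qed.

Lemma uce_hom_lin : lin uf.
Proof. by move=> k x y; rewrite !uce_hom_lift; apply: (uce_lift_lin kills_hom). Qed.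

Lemma uce_hom_pair a b : uf (PV a b) = PW (f a) (f b).
Proof. by rewrite uce_hom_lift uce_lift_pair //; apply: kills_hom. Qed.

Lemma uce_der_natural d delta : is_der brW alW d -> is_der brV alV delta ->
  (forall x, f (delta x) = d (f x)) ->
  forall u, uce_der brW alW d (uf u) = uf (uce_der brV alV delta u).
Proof.
move=> dD deltaD fdelta; have [_ _ fal] := fH.
apply: uce_lin_eq; [exact: lin_comp (uce_der_lin HW dD) uce_hom_lin |
                    exact: lin_comp uce_hom_lin (uce_der_lin HV deltaD) |].
move=> a b; rewrite uce_hom_pair !uce_der_pair // (linD uce_hom_lin).
by rewrite !uce_hom_pair !fdelta !fal.
Qed.

Section Surjective.
Hypothesis fS : forall y, exists x, f x = y.

Lemma uce_hom_surj v : exists u, uf u = v.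
Proof.
pose s := rsection fS.
exists (\sum_(p <- repr v) p.1 *: PV (s p.2.1) (s p.2.2)).
rewrite {2}(uce_span v) (lin_sum uce_hom_lin); apply: eq_bigr => p _.
by rewrite (linZ uce_hom_lin) uce_hom_pair !rsectionK.
Qed.

Lemma alpha_perfect_image : alpha_perfect brV alV -> alpha_perfect brW alW.
Proof.
have [fL fbr fal] := fH.
move=> Vperf y; have [x <-] := fS y; have [s ->] := Vperf x.
exists [seq (p.1, (f p.2.1, f p.2.2)) | p <- s].
by rewrite (lin_sum fL) big_map; apply: eq_bigr => p _; rewrite (linZ fL) fbr !fal.
Qed.

End Surjective.

End UceFunctor.

Section Descent.
Variables (K : fieldType) (A B : lmodType K).
Variables (brA : A -> A -> A) (alA : A -> A) (brB : B -> B -> B) (alB : B -> B).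
Variables (tau : A -> B) (t : B -> A) (D : A -> A).
Hypotheses (tauH : is_hom brA alA brB alB tau) (tauK : forall y, tau (t y) = y).
Hypotheses (DD : is_der brA alA D) (Dker : forall a, tau a = 0 -> tau (D a) = 0).

Lemma descend_key a : tau (D (t (tau a))) = tau (D a).
Proof.
have [tauL _ _] := tauH; have [DL _ _] := DD.
apply/eqP; rewrite -subr_eq0 -(linB tauL) -(linB DL) Dker //.
by rewrite (linB tauL) tauK subrr.
Qed.

Lemma descend_der : is_der brB alB (fun y => tau (D (t y))).
Proof.
have [tauL taubr taual] := tauH; have [DL Dbr Dal] := DD.
split.
- move=> k x y; have -> : k *: x + y = tau (k *: t x + t y) by rewrite tauL !tauK.
  by rewrite descend_key DL tauL.
- move=> x y; have -> : brB x y = tau (brA (t x) (t y)) by rewrite taubr !tauK.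
  by rewrite descend_key Dbr (linD tauL) !taubr !taual !tauK.
move=> x; have -> : alB x = tau (alA (t x)) by rewrite taual tauK.
by rewrite descend_key Dal taual.
Qed.

End Descent.

Section AlphaCover.
Variables (K : fieldType) (L' L : lmodType K).
Variables (br' : L' -> L' -> L') (al' : L' -> L') (br : L -> L -> L) (al : L -> L).
Hypotheses (HL' : hom_leibniz br' al') (HL : hom_leibniz br al).
Variable f : L' -> L.
Hypotheses (fH : is_hom br' al' br al f) (fS : forall y, exists x, f x = y).
Hypothesis fcentral : forall x, f x = 0 -> forall y, br' x y = 0 /\ br' y x = 0.
Hypothesis L'perf : alpha_perfect br' al'.
Local Notation C := (uceC br' al' br al f).
Local Notation s := (rsection fS).

(* The kernel of f is central, so the bracket of L' factors through f. *)
Lemma cover_br_congr a a' b b' : f a = f a' -> f b = f b' -> br' a b = br' a' b'.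
Proof.
have [fL _ _] := fH; move=> ea eb.
have za : f (a - a') = 0 by rewrite (linB fL) ea subrr.
have zb : f (b - b') = 0 by rewrite (linB fL) eb subrr.
have /eqP := linB (br_linl HL' b) a a'; rewrite /= (fcentral za b).1 eq_sym subr_eq0 => /eqP->.
by have /eqP := linB (br_linr HL' a') b b'; rewrite (fcentral zb a').2 eq_sym subr_eq0 => /eqP.
Qed.

Definition cover_bracket (x : L * L) : L' := br' (s x.1) (s x.2).

Lemma kills_cover_bracket : kills (uce_rel br al) cover_bracket.
Proof.
have [fL fbr fal] := fH.
apply: kills_uce_rel => [b|a|x1 x2 x3] /=.
- move=> k a a'; rewrite /cover_bracket /= -(br_linl HL').
  by apply: cover_br_congr; rewrite ?fL !rsectionK.
- move=> k b b'; rewrite /cover_bracket /= -(br_linr HL').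
  by apply: cover_br_congr; rewrite ?fL !rsectionK.
rewrite /cover_bracket /= -(br_leibniz HL' (s x1) (s x2) (s x3)).
by congr (- _ + _ + _); apply: cover_br_congr; rewrite ?fbr ?fal !rsectionK.
Qed.

Definition cover_tau : uce br al -> L' := uce_lift cover_bracket.
Local Notation tau := cover_tau.

Lemma tau_lin : lin tau. Proof. exact: (uce_lift_lin kills_cover_bracket). Qed.

Lemma tau_pair a b : tau (uce_pair br al a b) = br' (s a) (s b).
Proof. exact: (uce_lift_pair kills_cover_bracket a b). Qed.

Lemma f_tau u : f (tau u) = uceU br al u.
Proof.
have [fL fbr _] := fH; move: u.
apply: uce_lin_eq; [exact: lin_comp fL tau_lin | exact: uceU_lin |].
by move=> a b; rewrite tau_pair uceU_pair // fbr !rsectionK.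
Qed.

Lemma tau_uce_hom u : tau (uce_hom br' al' br al f u) = uceU br' al' u.
Proof.
move: u; apply: uce_lin_eq; [exact: lin_comp tau_lin (uce_hom_lin fH) | exact: uceU_lin |].
move=> a b; rewrite uce_hom_pair // tau_pair uceU_pair //.
by apply: cover_br_congr; rewrite rsectionK.
Qed.

Lemma tau_hom : is_hom (uce_br br al) (uce_al br al) br' al' tau.
Proof.
have [_ _ fal] := fH; split; first exact: tau_lin.
  by move=> u v; rewrite /uce_br tau_pair; apply: cover_br_congr; rewrite rsectionK f_tau.
apply: uce_lin_eq; [exact: lin_comp tau_lin (uce_al_lin HL) |
                    exact: lin_comp (al_lin HL') tau_lin |].
move=> a b; rewrite uce_al_pair // !tau_pair (al_br HL').
by apply: cover_br_congr; rewrite fal !rsectionK.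
Qed.

Lemma C_ker_tau v : C v <-> tau v = 0.
Proof.
split; first by move=> [u [u0 ->]]; rewrite tau_uce_hom.
move=> v0; have [u uv] := uce_hom_surj fH fS v.
by exists u; split; rewrite -?tau_uce_hom uv.
Qed.

Lemma tau_surj x : exists v, tau v = x.
Proof.
have [u <-] := uceU_surj HL' L'perf x.
by exists (uce_hom br' al' br al f u); rewrite tau_uce_hom.
Qed.

Local Notation t := (rsection tau_surj).

Lemma C_sub_kerU v : C v -> uceU br al v = 0.
Proof. by move=> /C_ker_tau v0; rewrite -f_tau v0 (lin0 (hom_lin fH)). Qed.

Lemma lift_C_stable d delta : is_der br al d -> is_der br' al' delta ->
  (forall x, f (delta x) = d (f x)) -> forall v, C v -> C (uce_der br al d v).
Proof.
move=> dD deltaD fdelta v [u [u0 ->]].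
exists (uce_der br' al' delta u); split; last exact: uce_der_natural.
by rewrite uceU_der // u0 (lin0 (der_lin deltaD)).
Qed.

Lemma der_eq_of_image d1 d2 : is_der br' al' d1 -> is_der br' al' d2 ->
  (forall x, f (d1 x) = f (d2 x)) -> forall x, d1 x = d2 x.
Proof.
case=> d1L d1br _ [d2L d2br _] fd x; have [r ->] := L'perf x.
rewrite (lin_sum d1L) (lin_sum d2L); apply: eq_bigr => p _.
by rewrite (linZ d1L) (linZ d2L) d1br d2br; congr (_ *: (_ + _)); apply: cover_br_congr.
Qed.

Definition lift_der (d : L -> L) (x : L') : L' := tau (uce_der br al d (t x)).

Lemma lift_der_spec d x : is_der br al d -> f (lift_der d x) = d (f x).
Proof.
by move=> dD; rewrite /lift_der f_tau uceU_der // -f_tau rsectionK.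
Qed.

(* For C-stable d, uce(d) preserves the kernel of tau and descends. *)
Lemma lift_der_is_der d : is_der br al d -> (forall v, C v -> C (uce_der br al d v)) ->
  is_der br' al' (lift_der d).
Proof.
move=> dD dC; apply: descend_der tau_hom (rsectionK tau_surj) (uce_der_is_der HL dD) _.
by move=> v /C_ker_tau /dC /C_ker_tau.
Qed.

Definition liftable (d : L -> L) : Prop :=
  is_der br al d /\ (forall v, C v -> C (uce_der br al d v)).

Lemma lift_criterion d : is_der br al d ->
  (exists delta, is_der br' al' delta /\ forall x, f (delta x) = d (f x))
  <-> (forall v, C v -> C (uce_der br al d v)).
Proof.
move=> dD; split=> [[delta [deltaD fdelta]]|dC]; first exact: lift_C_stable fdelta.
by exists (lift_der d); split=> [|x]; [exact: lift_der_is_der | exact: lift_der_spec].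
Qed.

Lemma lift_der_correct d : liftable d ->
  [/\ is_der br' al' (lift_der d), (forall x, f x = 0 -> f (lift_der d x) = 0)
    & (forall x, f (lift_der d x) = d (f x))].
Proof.
case=> dD dC; split=> [|x x0|x]; [exact: lift_der_is_der | | exact: lift_der_spec].
by rewrite lift_der_spec // x0 (lin0 (der_lin dD)).
Qed.

Lemma lift_der_unique d delta : liftable d -> is_der br' al' delta ->
  (forall x, f (delta x) = d (f x)) -> forall x, delta x = lift_der d x.
Proof.
move=> dI deltaD fdelta; have [dD _ fd] := lift_der_correct dI.
by apply: der_eq_of_image => // x; rewrite fdelta fd.
Qed.

Lemma liftable_comb k d1 d2 : liftable d1 -> liftable d2 ->
  liftable (fun y => k *: d1 y + d2 y).
Proof.
case=> d1D d1C [d2D d2C]; split; first exact: der_comb.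
move=> v vC; rewrite uce_der_comb // C_ker_tau tau_lin.
by move: (d1C v vC) (d2C v vC); rewrite !C_ker_tau => -> ->; rewrite scaler0 addr0.
Qed.

Lemma lift_der_comb k d1 d2 x : is_der br al d1 -> is_der br al d2 ->
  lift_der (fun y => k *: d1 y + d2 y) x = k *: lift_der d1 x + lift_der d2 x.
Proof. by move=> d1D d2D; rewrite /lift_der uce_der_comb // tau_lin. Qed.

Lemma lift_der_inj d1 d2 : is_der br al d1 -> is_der br al d2 ->
  (forall x, lift_der d1 x = lift_der d2 x) -> forall y, d1 y = d2 y.
Proof. by move=> d1D d2D e y; rewrite -(rsectionK fS y) -!lift_der_spec // e. Qed.

(* Part (b): a derivation rho of L' preserving Ker f is delta_d for the
   derivation d = f o rho o s it induces on L. *)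
Lemma lift_der_onto rho : is_der br' al' rho -> (forall x, f x = 0 -> f (rho x) = 0) ->
  exists d, liftable d /\ forall x, lift_der d x = rho x.
Proof.
move=> rhoD rhoK; pose d y := f (rho (s y)).
have dD : is_der br al d := descend_der fH (rsectionK fS) rhoD rhoK.
have frho x : f (rho x) = d (f x) by rewrite /d (descend_key fH (rsectionK fS) rhoD rhoK).
have dI : liftable d by split=> //; apply: lift_C_stable rhoD frho.
by exists d; split=> // x; rewrite (lift_der_unique dI rhoD frho).
Qed.

End AlphaCover.

Section UceDerivations.
Variables (K : fieldType) (L : lmodType K) (br : L -> L -> L) (al : L -> L).
Hypotheses (HL : hom_leibniz br al) (Lperf : alpha_perfect br al).
Local Notation U := (uceU br al).
Local Notation sU := (rsection (uceU_surj HL Lperf)).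

Lemma uceU_sectionK y : U (sU y) = y. Proof. exact: rsectionK. Qed.

Lemma uce_der_inj d1 d2 : is_der br al d1 -> is_der br al d2 ->
  (forall u, uce_der br al d1 u = uce_der br al d2 u) -> forall y, d1 y = d2 y.
Proof. by move=> d1D d2D e y; rewrite -(uceU_sectionK y) -!uceU_der // e. Qed.

(* A derivation of uce(L) preserving Ker U_alpha is uce(d) for d = U o delta o sU. *)
Lemma uce_der_onto delta : is_der (uce_br br al) (uce_al br al) delta ->
  (forall u, U u = 0 -> U (delta u) = 0) ->
  exists d, is_der br al d /\ forall u, uce_der br al d u = delta u.
Proof.
move=> deltaD deltaK.
have dD := descend_der (uceU_hom HL) uceU_sectionK deltaD deltaK.
exists (fun y => U (delta (sU y))); split => //.
have [deltaL deltabr _] := deltaD; have [_ _ Ual] := uceU_hom HL.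
apply: uce_lin_eq; [exact: uce_der_lin | exact: deltaL |].
move=> a b; rewrite uce_der_pair //.
have -> : uce_pair br al a b = uce_br br al (sU a) (sU b) by rewrite /uce_br !uceU_sectionK.
by rewrite deltabr /uce_br !Ual !uceU_sectionK addrC.
Qed.

End UceDerivations.

Theorem theorem4p5 (K : fieldType) (L' L : lmodType K)
    (br' : L' -> L' -> L') (al' : L' -> L') (br : L -> L -> L) (al : L -> L)
    (HL' : hom_leibniz br' al') (HL : hom_leibniz br al)
    (f : L' -> L) (Hf : alpha_cover br' al' br al f) :
  let C := uceC br' al' br al f in
  let inD := fun d : L -> L =>
    is_der br al d /\ (forall v, C v -> C (uce_der br al d v)) in
  (* C is contained in Ker U_alpha *)
  (forall v, C v -> uceU br al v = 0) /\
  (* (a) existence criterion *)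
  (forall d, is_der br al d ->
     ((exists delta, is_der br' al' delta /\ forall x, f (delta x) = d (f x))
      <-> (forall v, C v -> C (uce_der br al d v)))) /\
  (* (a) uniqueness and Ker f-invariance *)
  (forall d, inD d ->
     exists delta, [/\ is_der br' al' delta,
                      (forall x, f (delta x) = d (f x)),
                      (forall x, f x = 0 -> f (delta x) = 0)
                    & (forall delta', is_der br' al' delta' ->
                         (forall x, f (delta' x) = d (f x)) ->
                         forall x, delta' x = delta x)]) /\
  (* (b) Delta : d |-> delta_d is a linear isomorphism *)
  (exists Delta : (L -> L) -> (L' -> L'),
     [/\ (forall d, inD d ->
            [/\ is_der br' al' (Delta d),
                (forall x, f x = 0 -> f (Delta d x) = 0)
              & (forall x, f (Delta d x) = d (f x))]),
         (forall (k : K) d1 d2, inD d1 -> inD d2 ->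
            inD (fun y => k *: d1 y + d2 y) /\
            forall x, Delta (fun y => k *: d1 y + d2 y) x
                      = k *: Delta d1 x + Delta d2 x),
         (forall d1 d2, inD d1 -> inD d2 ->
            (forall x, Delta d1 x = Delta d2 x) -> forall y, d1 y = d2 y)
       & (forall rho, is_der br' al' rho ->
            (forall x, f x = 0 -> f (rho x) = 0) ->
            exists d, inD d /\ forall x, Delta d x = rho x)]) /\
  (* (c) d |-> uce_alpha(d) is a linear isomorphism
         Der(L) -> { delta in Der(uce(L)) | delta(Ker U) <= Ker U } *)
  [/\ (forall d, is_der br al d ->
         is_der (uce_br br al) (uce_al br al) (uce_der br al d) /\
         (forall u, uceU br al u = 0 -> uceU br al (uce_der br al d u) = 0)),
      (forall (k : K) d1 d2, is_der br al d1 -> is_der br al d2 ->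
         forall u, uce_der br al (fun y => k *: d1 y + d2 y) u
                   = k *: uce_der br al d1 u + uce_der br al d2 u),
      (forall d1 d2, is_der br al d1 -> is_der br al d2 ->
         (forall u, uce_der br al d1 u = uce_der br al d2 u) ->
         forall y, d1 y = d2 y)
    & (forall delta, is_der (uce_br br al) (uce_al br al) delta ->
         (forall u, uceU br al u = 0 -> uceU br al (delta u) = 0) ->
         exists d, is_der br al d /\ forall u, uce_der br al d u = delta u)].
Proof.
move=> C inD; case: Hf => -[fH fS fcentral] L'perf.
have Lperf := alpha_perfect_image fH fS L'perf.
pose Delta := lift_der HL' fH fS fcentral L'perf.
have Delta_ok := lift_der_correct HL' HL fH fS fcentral L'perf.
split; first exact: C_sub_kerU.
split; first by move=> d; apply: lift_criterion.
split.
  move=> d dI; have [deltaD deltaK fdelta] := Delta_ok d dI.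
  by exists (Delta d); split=> // delta'; apply: lift_der_unique.
split.
  exists Delta; split.
  - exact: Delta_ok.
  - move=> k d1 d2 d1I d2I; split; first exact: liftable_comb.
    by case: d1I d2I => d1D _ [d2D _] x; apply: lift_der_comb.
  - by move=> d1 d2 [d1D _] [d2D _]; apply: lift_der_inj.
  - by move=> rho; apply: lift_der_onto.
split.
- move=> d dD; split=> [|u u0]; first exact: uce_der_is_der.
  by rewrite uceU_der // u0 (lin0 (der_lin dD)).
- exact: uce_der_comb.
- exact: uce_der_inj.
- exact: uce_der_onto.
Qed.
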